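(* Let $\alpha\le0$ and $\beta<0$. Then for every integer $n\ge2$ and every $1\le k\le n-1$, \[ \big(S_{\alpha,\beta}(n,k)\big)^2\ge\Big(1+\frac1k\Big)\Big(1+\frac1{n-k}\Big)S_{\alpha,\beta}(n,k+1)\,S_{\alpha,\beta}(n,k-1); \] in particular the sequence $(S_{\alpha,\beta}(n,k))_{0\le k\le n}$ is log-concave.
   Context: For real $a$ and integer $n\ge 1$, $\langle a\rangle_n:=a(a+1)\cdots(a+n-1)$ and $\langle a\rangle_0:=1$. For real $\alpha,\beta$ and integers $0\le k\le n$, $S_{\alpha,\beta}(n,k):=\frac{1}{k!}\sum_{j=0}^{k}(-1)^{k-j}\binom{k}{j}\langle-\alpha-\beta j\rangle_n$. *)

(* the statement is purely algebraic, so we state it over an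
   arbitrary real field R (this includes the reals). *)
From HB Require Import structures.
From mathcomp Require Import all_boot all_order all_algebra.
Set Implicit Arguments. Unset Strict Implicit. Unset Printing Implicit Defensive.
Import Order.TTheory GRing.Theory Num.Theory.
Local Open Scope ring_scope.

Definition rising {R : pzRingType} (a : R) (n : nat) : R :=
  \prod_(i < n) (a + i%:R).

Definition Sab {R : fieldType} (alpha beta : R) (n k : nat) : R :=
  (k`!%:R)^-1 * \sum_(j < k.+1)
     (-1) ^+ (k - j) * ('C(k, j))%:R * rising (- alpha - beta * j%:R) n.

(* Put a = -alpha >= 0 and b = -beta > 0.  From
   <a + b j>_(n+1) = (a + b j + n) <a + b j>_n and the identity
   Delta^(k+1)[j g(j)] = (k+1) Delta^k[g(j+1)] for iterated forward differences
   one gets the recurrence S(n+1,k+1) = (a + n + b(k+1)) S(n,k+1) + b S(n,k),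
   whose coefficients are nonnegative; hence S(n,k) >= 0, and S(n,k) > 0 for
   0 < k <= n.  The inequality says that S(n,k) / C(n,k) is log-concave in k,
   and it propagates from row n to row n+1: substituting the recurrence,
   (k+1)(m+1) times the gap of the new inequality is a square, plus a
   nonnegative multiple of S(n,k+1)^2, plus nonnegative multiples of the gaps
   of the inequalities of row n at two adjacent centres and of their product. *)
From HB Require Import structures.
From mathcomp Require Import all_boot all_order all_algebra.
From mathcomp Require Import ring lra zify.
Import Order.TTheory GRing.Theory Num.Theory.
Local Open Scope ring_scope.
Set Implicit Arguments. Unset Strict Implicit.

Section FiniteDifference.
Variable R : comPzRingType.
Implicit Types (g h : nat -> R) (c : R).

Definition fdiff g (k : nat) : R :=
  \sum_(j < k.+1) (-1) ^+ (k - j) * 'C(k, j)%:R * g j.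

Lemma eq_fdiff g h k : g =1 h -> fdiff g k = fdiff h k.
Proof. by move=> eq_gh; apply: eq_bigr => j _; rewrite eq_gh. Qed.

Lemma fdiff0 g : fdiff g 0 = g 0%N.
Proof. by rewrite /fdiff big_ord1 subnn expr0 bin0 !mul1r. Qed.

Lemma fdiffS g k : fdiff g k.+1 = fdiff (fun j => g j.+1) k - fdiff g k.
Proof.
rewrite /fdiff big_ord_recl /= subn0 bin0 mulr1.
under eq_bigr => i _ do rewrite /bump /= add1n subSS binS natrD mulrDr mulrDl.
rewrite big_split /= [X in _ + (X + _)]big_ord_recr /= bin_small // mulr0 mul0r addr0.
rewrite [X in _ = _ - X]big_ord_recl /= subn0 bin0 mulr1.
rewrite opprD addrCA [_ + (_ + _)]addrC addrA; congr (_ + _).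
  by rewrite exprS mulN1r -mulNr addrC.
rewrite -sumrN; apply: eq_bigr => i _; rewrite /bump /= add1n.
by rewrite -(subnSK (ltn_ord i)) exprS !mulN1r !mulNr.
Qed.

Lemma fdiff_natmul g k :
  fdiff (fun j => j%:R * g j) k.+1 = k.+1%:R * fdiff (fun j => g j.+1) k.
Proof.
rewrite /fdiff big_ord_recl /= mul0r mulr0 add0r mulr_sumr.
apply: eq_bigr => i _; rewrite /bump /= add1n subSS.
have binE : i.+1%:R * 'C(k.+1, i.+1)%:R = k.+1%:R * 'C(k, i)%:R :> R.
  by rewrite -!natrM mul_bin_diag.
transitivity ((-1) ^+ (k - i) * (i.+1%:R * 'C(k.+1, i.+1)%:R) * g i.+1); first ring.
by rewrite binE; ring.
Qed.

Lemma fdiffD g h k : fdiff (fun j => g j + h j) k = fdiff g k + fdiff h k.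
Proof. by rewrite /fdiff -big_split; apply: eq_bigr => i _; rewrite mulrDr. Qed.

Lemma fdiffZ c g k : fdiff (fun j => c * g j) k = c * fdiff g k.
Proof. by rewrite /fdiff mulr_sumr; apply: eq_bigr => i _; ring. Qed.

End FiniteDifference.

Lemma risingS (R : pzRingType) (a : R) n : rising a n.+1 = rising a n * (a + n%:R).
Proof. by rewrite /rising big_ord_recr. Qed.

Lemma ulc_step (R : realFieldType) (a b x0 x1 x2 x3 y1 y2 y3 : R) (k m : nat) :
  0 <= a -> 0 <= b -> 0 <= x0 -> 0 <= x1 -> 0 <= x2 -> 0 <= x3 ->
  k.+2%:R * m.+1%:R * (x1 * x3) <= k.+1%:R * m%:R * x2 ^+ 2 ->
  k.+1%:R * m.+2%:R * (x0 * x2) <= k%:R * m.+1%:R * x1 ^+ 2 ->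
  k.+2%:R * m.+2%:R * (x0 * x3) <= k%:R * m%:R * (x2 * x1) ->
  y1 = (a + b * k%:R) * x1 + b * x0 ->
  y2 = (a + b * k.+1%:R) * x2 + b * x1 ->
  y3 = (a + b * k.+2%:R) * x3 + b * x2 ->
  k.+2%:R * m.+2%:R * (y1 * y3) <= k.+1%:R * m.+1%:R * y2 ^+ 2.
Proof.
move=> a_ge0 b_ge0 x0_ge0 x1_ge0 x2_ge0 x3_ge0 lc2 lc1 lc03 -> -> ->.
have sos : k.+1%:R * m.+1%:R * (k.+1%:R * m.+1%:R * ((a + b * k.+1%:R) * x2 + b * x1) ^+ 2
      - k.+2%:R * m.+2%:R * (((a + b * k%:R) * x1 + b * x0) * ((a + b * k.+2%:R) * x3 + b * x2)))
    = (m.+1%:R * b * x1 + k.+1%:R * (b * m.+1%:R - a) * x2) ^+ 2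
    + k.+1%:R ^+ 2 * (b ^+ 2 * (k * k.+2)%:R + 2 * a * b * (k.+1 + m.+1)%:R) * x2 ^+ 2
    + k.+1%:R * m.+2%:R * (a + b * k%:R) * (a + b * k.+2%:R)
        * (k.+1%:R * m%:R * x2 ^+ 2 - k.+2%:R * m.+1%:R * (x1 * x3))
    + m.+1%:R * k.+2%:R * b ^+ 2 * (k%:R * m.+1%:R * x1 ^+ 2 - k.+1%:R * m.+2%:R * (x0 * x2))
    + k.+1%:R * m.+1%:R * b * (a + b * k.+2%:R)
        * (k%:R * m%:R * (x2 * x1) - k.+2%:R * m.+2%:R * (x0 * x3)).
  ring.
have km_gt0 : 0 < k.+1%:R * m.+1%:R :> R by rewrite mulr_gt0 ?ltr0n.
rewrite -subr_ge0 -(pmulr_rge0 _ km_gt0) sos.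
rewrite -subr_ge0 in lc2; rewrite -subr_ge0 in lc1; rewrite -subr_ge0 in lc03.
rewrite !addr_ge0 ?sqr_ge0 //.
all: repeat first [ assumption | exact: ler0n | exact: sqr_ge0
                  | apply: mulr_ge0 | apply: addr_ge0 ].
Qed.

Lemma ulc_chain (R : realFieldType) (x0 x1 x2 x3 : R) (k m : nat) :
  0 <= x0 -> 0 < x1 -> 0 < x2 -> 0 <= x3 ->
  k.+2%:R * m.+1%:R * (x1 * x3) <= k.+1%:R * m%:R * x2 ^+ 2 ->
  k.+1%:R * m.+2%:R * (x0 * x2) <= k%:R * m.+1%:R * x1 ^+ 2 ->
  k.+2%:R * m.+2%:R * (x0 * x3) <= k%:R * m%:R * (x2 * x1).
Proof.
move=> x0_ge0 x1_gt0 x2_gt0 x3_ge0 lc2 lc1.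
have scale_gt0 : 0 < k.+1%:R * m.+1%:R * (x2 * x1) by rewrite !mulr_gt0 ?ltr0n.
rewrite -(ler_pM2l scale_gt0).
have x13_ge0 : 0 <= k.+2%:R * m.+1%:R * (x1 * x3) by rewrite !mulr_ge0 // ltW.
have x02_ge0 : 0 <= k.+1%:R * m.+2%:R * (x0 * x2) by rewrite !mulr_ge0 // ltW.
have := ler_pM x13_ge0 x02_ge0 lc2 lc1.
lra.
Qed.

Lemma ulc_normalize (R : numFieldType) (K M P Q : R) : 0 < K -> 0 < M ->
  (K + 1) * (M + 1) * P <= K * M * Q -> (1 + K^-1) * (1 + M^-1) * P <= Q.
Proof.
move=> K_gt0 M_gt0 ulc.
have -> : (1 + K^-1) * (1 + M^-1) * P = (K + 1) * (M + 1) * P / (K * M).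
  by field; rewrite (gt_eqF K_gt0) (gt_eqF M_gt0).
by rewrite ler_pdivrMr ?[Q * _]mulrC //; exact: mulr_gt0.
Qed.

Section SabRecurrence.
Variables (R : numFieldType) (alpha beta : R).
Local Notation S := (Sab alpha beta).

Lemma SabE n k :
  S n k = (k`!%:R)^-1 * fdiff (fun j => rising (- alpha - beta * j%:R) n) k.
Proof. by []. Qed.

Lemma Sab0 k : S 0 k = (k == 0)%:R.
Proof.
case: k => [|k]; first by rewrite SabE fdiff0 /rising big_ord0 invr1 mul1r.
rewrite SabE fdiffS !(@eq_fdiff _ _ (fun=> 1)) ?subrr ?mulr0 // => j;
  exact: big_ord0.
Qed.

Lemma Sab_rec0 n : S n.+1 0 = (- alpha + n%:R) * S n 0.
Proof. by rewrite !SabE !fdiff0 risingS; ring. Qed.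

Lemma Sab_recS n k :
  S n.+1 k.+1 = (- alpha + n%:R - beta * k.+1%:R) * S n k.+1 - beta * S n k.
Proof.
pose g j := rising (- alpha - beta * j%:R) n.
have gS j : rising (- alpha - beta * j%:R) n.+1
    = (- alpha + n%:R) * g j + (- beta) * (j%:R * g j).
  by rewrite risingS /g; ring.
rewrite !SabE (eq_fdiff _ gS) fdiffD !fdiffZ fdiff_natmul -/g.
have -> : fdiff (fun j => g j.+1) k = fdiff g k.+1 + fdiff g k by rewrite fdiffS subrK.
have k1_neq0 : k.+1%:R != 0 :> R by rewrite pnatr_eq0.
have fact_neq0 : k`!%:R != 0 :> R by rewrite pnatr_eq0 -lt0n fact_gt0.
by rewrite factS natrM; field; rewrite fact_neq0 addrC natr1 k1_neq0.
Qed.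

End SabRecurrence.

Section SabSign.
Variables (R : realFieldType) (alpha beta : R).
Hypotheses (alpha_le0 : alpha <= 0) (beta_lt0 : beta < 0).
Local Notation S := (Sab alpha beta).

Let coef_ge0 n : 0 <= - alpha + n%:R.
Proof. by rewrite addr_ge0 ?oppr_ge0. Qed.

Let negbeta_ge0 : 0 <= - beta.
Proof. by rewrite oppr_ge0 ltW. Qed.

Let coefS_gt0 n k : 0 < - alpha + n%:R - beta * k.+1%:R.
Proof.
have : 0 < - beta * k.+1%:R by rewrite mulr_gt0 ?ltr0n // oppr_gt0.
by have := coef_ge0 n; lra.
Qed.

Lemma Sab_ge0 n k : 0 <= S n k.
Proof.
elim: n k => [|n IHn] [|k]; rewrite ?Sab0 ?ler01 ?lexx //.
  by rewrite Sab_rec0 mulr_ge0.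
rewrite Sab_recS; apply: addr_ge0; first exact: mulr_ge0 (ltW (coefS_gt0 n k)) (IHn _).
by rewrite -mulNr; apply: mulr_ge0 _ (IHn k); rewrite oppr_ge0 ltW.
Qed.

Lemma Sab_eq0 n k : (n < k)%N -> S n k = 0.
Proof.
elim: n k => [|n IHn] [|k] // lt_nk; first by rewrite Sab0.
by rewrite Sab_recS !IHn ?(ltnW lt_nk) // !mulr0 subrr.
Qed.

Lemma Sab_diag_gt0 n : 0 < S n n.
Proof.
elim: n => [|n IHn]; first by rewrite Sab0 ltr01.
by rewrite Sab_recS Sab_eq0 // mulr0 sub0r -mulNr mulr_gt0 // oppr_gt0.
Qed.

Lemma Sab_gt0 n k : (0 < k <= n)%N -> 0 < S n k.
Proof.
elim: n k => [|n IHn] [|k] //=.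
rewrite leq_eqVlt => /orP[/eqP[->]|lt_kn]; first exact: Sab_diag_gt0.
rewrite Sab_recS ltr_wpDr //; last exact: mulr_gt0 (coefS_gt0 n k) (IHn k.+1 lt_kn).
by rewrite -mulNr; apply: mulr_ge0 _ (Sab_ge0 n k); rewrite oppr_ge0 ltW.
Qed.

(* Row n+1 at the centre k = j+1, with i = n+1-k; the shift avoids k.-1. *)
Lemma Sab_ulc n j i : (j + i)%N = n ->
  j.+2%:R * i.+1%:R * (S n.+1 j * S n.+1 j.+2) <= j.+1%:R * i%:R * S n.+1 j.+1 ^+ 2.
Proof.
elim: n => [|n IHn] in j i *; case: i => [|i] sum_ji.
1,3: rewrite (@Sab_eq0 _ j.+2); last by lia.
1,2: by rewrite !mulr0 mul0r.
- by rewrite addnS in sum_ji.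
case: j => [|k] in sum_ji *.
  have /IHn lc2 : (0 + i = n)%N by lia.
  apply: (ulc_step (coef_ge0 n.+1) negbeta_ge0 (lexx 0) (Sab_ge0 _ _) (Sab_ge0 _ _)
            (Sab_ge0 _ _) lc2).
  1,2: lra.
  - by rewrite Sab_rec0; ring.
  - by rewrite Sab_recS; ring.
  - by rewrite Sab_recS; ring.
have /IHn lc2 : (k.+1 + i = n)%N by lia.
have /IHn lc1 : (k + i.+1 = n)%N by lia.
have x2_gt0 : 0 < S n.+1 k.+2 by rewrite Sab_gt0 //; lia.
have x1_gt0 : 0 < S n.+1 k.+1 by rewrite Sab_gt0 //; lia.
apply: (ulc_step (coef_ge0 n.+1) negbeta_ge0 (Sab_ge0 _ _) (Sab_ge0 _ _) (Sab_ge0 _ _)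
          (Sab_ge0 _ _) lc2 lc1 (ulc_chain (Sab_ge0 _ _) x1_gt0 x2_gt0 (Sab_ge0 _ _) lc2 lc1)).
all: by rewrite Sab_recS; ring.
Qed.

End SabSign.

Theorem mainTheorem10 (R : realFieldType) (alpha beta : R) :
  alpha <= 0 -> beta < 0 ->
  forall n k : nat, (2 <= n)%N -> (1 <= k)%N -> (k <= n - 1)%N ->
    (1 + (k%:R)^-1) * (1 + ((n - k)%N%:R)^-1)
      * Sab alpha beta n k.+1 * Sab alpha beta n k.-1
    <= Sab alpha beta n k ^+ 2
  /\ Sab alpha beta n k.+1 * Sab alpha beta n k.-1 <= Sab alpha beta n k ^+ 2.
Proof.
move=> alpha_le0 beta_lt0 [//|n] k _ k_gt0 k_le_n.
have /(Sab_ulc alpha_le0 beta_lt0) ulc : (k.-1 + (n.+1 - k) = n)%N.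
  by rewrite -subn1; lia.
rewrite prednK // -!natr1 in ulc.
have k_gt0R : 0 < k%:R :> R by rewrite ltr0n.
have nk_gt0R : 0 < (n.+1 - k)%N%:R :> R by rewrite ltr0n; lia.
have lc := ulc_normalize k_gt0R nk_gt0R ulc.
rewrite -mulrA [_ * Sab _ _ _ k.-1]mulrC; split=> //.
apply: le_trans lc; apply: ler_peMl; first exact: mulr_ge0 (Sab_ge0 _ _ _ _) (Sab_ge0 _ _ _ _).
by rewrite mulr_ege1 // lerDl invr_ge0 ltW.
Qed.
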